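(* Let $T\in K\{X\}_\infty$ be a monomial, $x_k\in X$, and let $I_k\subseteq\mathrm{Le}(T)$ be the set of leaves of $T$ labelled $x_k$. Then for every $j$, $$\partial_{kj}(T)=\sum_{\nu\in I_k}T_{\nu\to x_j},$$ where $T_{\nu\to x_j}$ is the tree obtained from $T$ by relabelling the leaf $\nu$ by $x_j$, and $$\partial_k(T)=\sum_{\nu\in I_k}\mathrm{red}\bigl(T|\{\nu\}^c\bigr),$$ where $\{\nu\}^c=\mathrm{Le}(T)\setminus\{\nu\}$.
   Context: $K$ is a field of characteristic $0$, $X=\{x_1,x_2,\dots\}$ a finite or countable set of variables. A planar rooted tree is reduced if no vertex has exactly one incoming edge. $K\{X\}_\infty$ has basis the monomials: the empty tree $1$ and all planar reduced rooted trees with leaves labelled by elements of $X$; for $k\ge2$, $\vee^k$ grafts $k$ nonempty trees (in order) onto a new root, extended multilinearly, with unit conventions (arguments $1$ omitted, $\vee^1=\mathrm{id}$, $\vee^k(1,\dots,1)=1$). A derivation $D$ is a linear map with $D(\vee^n(v_1,\dots,v_n))=\sum_i\vee^n(v_1,\dots,D(v_i),\dots,v_n)$ and $D|_K=0$. $\partial_k$ is the derivation with $\partial_k(x_l)=\delta_{kl}$; $\partial_{kj}$ is the derivation with $\partial_{kj}(x_l)=x_j$ if $l=k$ and $0$ otherwise. $\mathrm{Le}(T)$ is the set of leaves of $T$. For $I\subseteq\mathrm{Le}(T)$, $T|I$ is obtained from $T$ by deleting every vertex whose full subtree (vertex plus descendants) contains no leaf of $I$ (empty tree $1$ if $I=\emptyset$);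 $\mathrm{red}(S)$ deletes all vertices with exactly one child, keeping labels, the descendant relation and the planar order. *)

From HB Require Import structures.
From mathcomp Require Import all_boot all_order all_algebra.
From mathcomp Require Import finmap.
From mathcomp.multinomials Require Import monalg.

Set Implicit Arguments.
Unset Strict Implicit.
Unset Printing Implicit Defensive.

Import Order.TTheory GRing.Theory Num.Theory.
Local Open Scope ring_scope.

Section Trees.
Variable X : countType.

Inductive tree : Type :=
| Leaf of X
| Node of seq tree.

Fixpoint tree_encode (t : tree) : GenTree.tree X :=
  match t with
  | Leaf x => GenTree.Leaf x
  | Node ts => GenTree.Node 0 (map tree_encode ts)
  end.

Fixpoint tree_decode (g : GenTree.tree X) : tree :=
  match g with
  | GenTree.Leaf x => Leaf x
  | GenTree.Node _ gs => Node (map tree_decode gs)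
  end.

Fixpoint tree_codeK (t : tree) : tree_decode (tree_encode t) = t :=
  match t return tree_decode (tree_encode t) = t with
  | Leaf x => erefl
  | Node ts => f_equal Node
      ((fix aux (us : seq tree) :
          map tree_decode (map tree_encode us) = us :=
         match us with
         | [::] => erefl
         | u :: us' => f_equal2 cons (tree_codeK u) (aux us')
         end) ts)
  end.

End Trees.

Arguments Leaf {X}.
Arguments Node {X}.

HB.instance Definition _ (X : countType) :=
  Countable.copy (tree X) (can_type (@tree_codeK X)).

Section TreeOps.
Variable X : countType.
Implicit Types (t : tree X) (ts : seq (tree X)).

Fixpoint reduced t : bool :=
  match t with
  | Leaf _ => true
  | Node ts => (1 < size ts)%N && all reduced ts
  end.

(* the (possibly empty) tree: None is the empty tree 1 *)
Definition reducedo (o : option (tree X)) : bool :=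
  if o is Some t then reduced t else true.

Fixpoint leaves t : seq X :=
  match t with
  | Leaf x => [:: x]
  | Node ts => flatten (map leaves ts)
  end.

Definition nleaves t := size (leaves t).

Definition leaveso (o : option (tree X)) : seq X :=
  if o is Some t then leaves t else [::].

(* map every leaf label, knowing the index of the leaf (left-to-right,
   starting at 0) *)
Fixpoint mapl (f : nat -> X -> X) t : tree X :=
  match t with
  | Leaf x => Leaf (f 0%N x)
  | Node ts => Node
      ((fix inner (g : nat -> X -> X) (us : seq (tree X)) :=
          match us with
          | [::] => [::]
          | u :: us' => mapl g u :: inner (fun n => g (n + nleaves u)%N) us'
          end) f ts)
  end.

(* T_{nu -> y}: relabel the leaf of index i by y *)
Definition relabel (i : nat) (y : X) t : tree X :=
  mapl (fun n x => if n == i then y else x) t.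

(* T|I, for a set I of leaf indices: delete every vertex whose full
   subtree contains no leaf of I (None = the empty tree 1) *)
Fixpoint restr (I : pred nat) t : option (tree X) :=
  match t with
  | Leaf x => if I 0%N then Some (Leaf x) else None
  | Node ts =>
      let cs := (fix inner (J : pred nat) (us : seq (tree X)) :=
          match us with
          | [::] => [::]
          | u :: us' =>
              let J' := fun n => J (n + nleaves u)%N in
              match restr J u with
              | Some v => v :: inner J' us'
              | None => inner J' us'
              end
          end) I ts in
      if cs is [::] then None else Some (Node cs)
  end.

Fixpoint red t : tree X :=
  match t with
  | Leaf x => Leaf x
  | Node ts =>
      match ts with
      | [:: u] => red u
      | _ => Node (map red ts)
      end
  end.

End TreeOps.

(* Monomials of K{X}_oo: the empty tree and the reduced planar rooted  *)
(* trees with leaves labelled in X.                                   *)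
Notation mono X := {o : option (tree X) | reducedo o}.

Definition mono1 (X : countType) : mono X := exist _ None isT.

(* the monomial represented by a (reduced) tree, defaulting to 1 *)
Definition mk_mono (X : countType) (o : option (tree X)) : mono X :=
  insubd (mono1 X) o.

Notation KX K X := {malg K[mono X]}.

(* grafting of monomials, with the unit conventions *)
Definition vee_mono (X : countType) (ms : seq (mono X)) : mono X :=
  match pmap (fun m : mono X => val m) ms with
  | [::] => mono1 X
  | [:: t] => mk_mono (Some t)
  | ts => mk_mono (Some (Node ts))
  end.

Fixpoint multilin (K : fieldType) (X : countType)
    (f : seq (mono X) -> KX K X) (vs : seq (KX K X)) : KX K X :=
  match vs with
  | [::] => f [::]
  | v :: vs' =>
      \sum_(m <- msupp v) v@_m *: multilin (fun ms => f (m :: ms)) vs'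
  end.

Definition vee (K : fieldType) (X : countType) (vs : seq (KX K X)) : KX K X :=
  multilin (fun ms => << vee_mono ms >>) vs.

Definition xvar (K : fieldType) (X : countType) (x : X) : KX K X :=
  << mk_mono (Some (Leaf x)) >>.

Definition is_derivation (K : fieldType) (X : countType)
    (D : {linear KX K X -> KX K X}) : Prop :=
  (forall c : K, D (c *: << mono1 X >>) = 0) /\
  (forall vs : seq (KX K X), (2 <= size vs)%N ->
     D (vee vs) = \sum_(i < size vs) vee (set_nth 0 vs i (D (nth 0 vs i)))).

Definition is_partial (K : fieldType) (X : countType) (k : X)
    (D : {linear KX K X -> KX K X}) : Prop :=
  is_derivation D /\
  forall l : X, D (xvar K l) = (l == k)%:R *: << mono1 X >>.

Definition is_partial2 (K : fieldType) (X : countType) (k j : X)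
    (D : {linear KX K X -> KX K X}) : Prop :=
  is_derivation D /\
  forall l : X, D (xvar K l) = if l == k then xvar K j else 0.

From HB Require Import structures.
From mathcomp Require Import all_boot all_order all_algebra.
From mathcomp Require Import finmap.
From mathcomp.multinomials Require Import monalg.
Import GRing.Theory.

Set Implicit Arguments.
Unset Strict Implicit.
Unset Printing Implicit Defensive.

(* A reduced tree with children t_1, ..., t_r is the grafting vee^r(t_1, ..., t_r), so a
   derivation D sends it to the sum over i of the graftings with t_i replaced by D(t_i).
   By induction, D(t_i) is a sum over the leaves of t_i labelled x_k, and grafting the
   term of the local leaf n back in place of t_i gives the term of the whole tree at the
   leaf whose global index is n plus the number of leaves of t_1, ..., t_(i-1).  For
   partial_k the leaf is deleted, possibly together with t_i itself; the unit conventions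
   of vee and the reduction red absorb the resulting unary and empty vertices. *)

Section Forests.
Variable X : countType.
Implicit Types (t u : tree X) (ts us : seq (tree X)) (f g : nat -> X -> X) (I J : pred nat).
Local Notation tnil := (@Node X [::]).

Lemma tree_ind_mem (P : tree X -> Prop) :
    (forall x, P (Leaf x)) ->
    (forall ts, (forall t, t \in ts -> P t) -> P (Node ts)) ->
  forall t, P t.
Proof.
move=> PLeaf PNode; fix IH 1 => -[x|ts]; first exact: PLeaf.
apply: PNode; elim: ts => [|u us IHus] t; first by rewrite in_nil => /notF[].
rewrite inE => /predU1P[-> | t_us]; [exact: IH | exact: IHus].
Qed.

Lemma nleaves_Node ts : nleaves (Node ts) = sumn (map (@nleaves X) ts).
Proof. by rewrite /nleaves /= size_flatten /shape -map_comp. Qed.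

Definition leaf_offset ts i := sumn (take i (map (@nleaves X) ts)).

Lemma leaf_offsetS ts i : (i < size ts)%N ->
  leaf_offset ts i.+1 = (leaf_offset ts i + nleaves (nth tnil ts i))%N.
Proof.
by move=> lt_i; rewrite /leaf_offset -!map_take (take_nth tnil lt_i) map_rcons sumn_rcons.
Qed.

Definition ocons (o : option (tree X)) ts := if o is Some v then v :: ts else ts.

Definition subst_child ts i (o : option (tree X)) := take i ts ++ ocons o (drop i.+1 ts).

Lemma size_subst_child_gt0 ts i o : (1 < size ts)%N -> (i < size ts)%N ->
  (0 < size (subst_child ts i o))%N.
Proof.
move=> size_ts lt_i; rewrite /subst_child.
case: i lt_i => [_|i lt_i]; first by case: ts size_ts => [|u [|u' us]] //; case: o.
by case: ts lt_i {size_ts}.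
Qed.

Fixpoint mapls f ts : seq (tree X) :=
  if ts is u :: us then mapl f u :: mapls (fun n => f (n + nleaves u)%N) us else [::].

Lemma maplE f ts : mapl f (Node ts) = Node (mapls f ts).
Proof. by []. Qed.

Lemma eq_mapl f g t : f =2 g -> mapl f t = mapl g t.
Proof.
elim/tree_ind_mem: t f g => [x|ts IH] f g fg; first by rewrite /= fg.
rewrite !maplE; congr Node; elim: ts IH f g fg => //= u us IHus IH f g fg.
rewrite (IH u (mem_head _ _) f g fg); congr (_ :: _).
apply: IHus => [t tus|n x]; last exact: fg.
by apply: IH; rewrite inE tus orbT.
Qed.

Lemma mapl_id f t : (forall m x, (m < nleaves t)%N -> f m x = x) -> mapl f t = t.
Proof.
elim/tree_ind_mem: t f => [x|ts IH] f fid /=; first by rewrite fid.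
rewrite nleaves_Node in fid; congr Node.
elim: ts IH f fid => //= u us IHus IH f fid.
rewrite (IH u (mem_head _ _)) => [|m x lt_m]; last by rewrite fid ?ltn_addr.
congr (_ :: _); apply: IHus => [t tus|m x lt_m]; first by apply: IH; rewrite inE tus orbT.
by rewrite fid // addnC ltn_add2l.
Qed.

Lemma mapls_id f ts :
  (forall m x, (m < sumn (map (@nleaves X) ts))%N -> f m x = x) -> mapls f ts = ts.
Proof. by rewrite -nleaves_Node => /mapl_id[]. Qed.

Lemma mapls_at f ts i : (i < size ts)%N ->
    (forall m x, (m < leaf_offset ts i)%N -> f m x = x) ->
    (forall m x, (leaf_offset ts i.+1 <= m)%N -> f m x = x) ->
  mapls f ts = subst_child ts i (Some (mapl (fun m => f (leaf_offset ts i + m)%N) (nth tnil ts i))).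
Proof.
rewrite /subst_child; elim: ts f i => //= u us IH f [|i] lt_i fid_lo fid_hi /=.
  rewrite drop0 mapls_id // => m x lt_m; apply: fid_hi.
  by rewrite /leaf_offset /= take0 addn0 leq_addl.
rewrite mapl_id => [|m x lt_m]; last by apply: fid_lo; rewrite /leaf_offset /= ltn_addr.
rewrite (IH _ i) // => [|m x|m x].
- by congr (_ :: _ ++ _ :: _); apply: eq_mapl => m x; rewrite addnC addnA.
- by move=> lt_m; apply: fid_lo; rewrite /leaf_offset /= addnC ltn_add2l.
- by move=> le_m; apply: fid_hi; rewrite /leaf_offset /= addnC leq_add2r.
Qed.

Lemma size_mapls f ts : size (mapls f ts) = size ts.
Proof. by elim: ts f => //= u us IH f; rewrite IH. Qed.

Lemma reduced_mapl f t : reduced (mapl f t) = reduced t.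
Proof.
elim/tree_ind_mem: t f => [x|ts IH] f //; rewrite maplE /= size_mapls; congr (_ && _).
elim: ts IH f => //= u us IHus IH f; rewrite IH ?mem_head // IHus // => t tus.
by apply: IH; rewrite inE tus orbT.
Qed.

Fixpoint restrs I ts : seq (tree X) :=
  if ts is u :: us then ocons (restr I u) (restrs (fun n => I (n + nleaves u)%N) us)
  else [::].

Lemma restrE I ts :
  restr I (Node ts) = if restrs I ts is [::] then None else Some (Node (restrs I ts)).
Proof. by []. Qed.

Lemma eq_restr I J t : I =1 J -> restr I t = restr J t.
Proof.
elim/tree_ind_mem: t I J => [x|ts IH] I J IJ; first by rewrite /= IJ.
rewrite !restrE; suff -> : restrs I ts = restrs J ts by [].
elim: ts IH I J IJ => //= u us IHus IH I J IJ.
rewrite (IH u (mem_head _ _) I J IJ); congr ocons.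
apply: IHus => [t tus|n]; last exact: IJ.
by apply: IH; rewrite inE tus orbT.
Qed.

Lemma restr_full I t : reduced t -> (forall m, (m < nleaves t)%N -> I m) -> restr I t = Some t.
Proof.
elim/tree_ind_mem: t I => [x|ts IH] I; first by move=> _ /= ->.
case/andP=> size_ts red_ts full; rewrite restrE.
suff -> : restrs I ts = ts by case: ts size_ts {IH red_ts full}.
rewrite nleaves_Node in full; elim: ts IH I full {size_ts} red_ts => //= u us IHus IH I full.
case/andP=> red_u red_us; rewrite IH ?mem_head // => [|m lt_m]; last by rewrite full ?ltn_addr.
congr (_ :: _); apply: IHus => // [t tus|m lt_m]; first by apply: IH; rewrite inE tus orbT.
by rewrite full // addnC ltn_add2l.
Qed.

Lemma restrs_full I ts : all (@reduced X) ts ->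
  (forall m, (m < sumn (map (@nleaves X) ts))%N -> I m) -> restrs I ts = ts.
Proof.
elim: ts I => //= u us IH I /andP[red_u red_us] full.
rewrite restr_full // => [|m lt_m]; last by rewrite full ?ltn_addr.
by rewrite IH // => m lt_m; rewrite full // addnC ltn_add2l.
Qed.

Lemma restrs_at I ts i : (i < size ts)%N -> all (@reduced X) ts ->
    (forall m, (m < leaf_offset ts i)%N -> I m) ->
    (forall m, (leaf_offset ts i.+1 <= m)%N -> I m) ->
  restrs I ts = subst_child ts i (restr (fun m => I (leaf_offset ts i + m)%N) (nth tnil ts i)).
Proof.
rewrite /subst_child; elim: ts I i => //= u us IH I [|i] lt_i /andP[red_u red_us] I_lo I_hi /=.
  rewrite drop0 restrs_full // => m lt_m; apply: I_hi.
  by rewrite /leaf_offset /= take0 addn0 leq_addl.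
rewrite restr_full // => [|m lt_m]; last by apply: I_lo; rewrite /leaf_offset /= ltn_addr.
rewrite (IH _ i) // => [|m|m].
- by congr (_ :: _ ++ ocons _ _); apply: eq_restr => m; rewrite addnC addnA.
- by move=> lt_m; apply: I_lo; rewrite /leaf_offset /= addnC ltn_add2l.
- by move=> le_m; apply: I_hi; rewrite /leaf_offset /= addnC leq_add2r.
Qed.

Fixpoint no_empty_node t : bool :=
  if t is Node ts then (0 < size ts)%N && all no_empty_node ts else true.

Lemma restr_no_empty_node I t v : restr I t = Some v -> no_empty_node v.
Proof.
elim/tree_ind_mem: t I v => [x|ts IH] I v /=; first by case: (I 0%N) => // -[<-].
rewrite -/(restr I (Node ts)) restrE.
have : all no_empty_node (restrs I ts).
  elim: ts IH I {v} => //= u us IHus IH I.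
  have IHus' : all no_empty_node (restrs (fun n => I (n + nleaves u)%N) us).
    by apply: IHus => t tus; apply: IH; rewrite inE tus orbT.
  by case E: (restr I u) => [w|] //=; rewrite (IH u (mem_head _ _) _ _ E).
by case: (restrs I ts) => // w ws ne_ws [<-].
Qed.

Lemma reduced_red t : no_empty_node t -> reduced (red t).
Proof.
elim/tree_ind_mem: t => [x|ts IH] //= /andP[size_ts ne_ts].
case: ts IH size_ts ne_ts => // u [|u' us] IH _.
  by rewrite /= andbT; apply: IH; rewrite mem_head.
move=> ne_ts; apply/allP => _ /mapP[w w_ts ->].
by apply: IH => //; apply: (allP ne_ts).
Qed.

Lemma red_id t : reduced t -> red t = t.
Proof.
elim/tree_ind_mem: t => [x|ts IH] //= /andP[size_ts red_ts].
have -> : map (@red X) ts = ts.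
  by rewrite -[RHS]map_id; apply/eq_in_map => w w_ts; apply: IH => //; apply: (allP red_ts).
by case: ts size_ts {IH red_ts} => // u [|u' us].
Qed.

Lemma map_red_id ts : all (@reduced X) ts -> map (@red X) ts = ts.
Proof. by elim: ts => //= u us IH /andP[red_u red_us]; rewrite red_id // IH. Qed.

Lemma reducedo_red_restr I t : reducedo (omap (@red X) (restr I t)).
Proof. by case E: (restr I t) => [v|] //=; apply/reduced_red/(restr_no_empty_node E). Qed.

End Forests.

Lemma all_take (T : Type) (P : pred T) s i : all P s -> all P (take i s).
Proof. by rewrite -{1}(cat_take_drop i s) all_cat => /andP[]. Qed.

Lemma all_drop (T : Type) (P : pred T) s i : all P s -> all P (drop i s).
Proof. by rewrite -{1}(cat_take_drop i s) all_cat => /andP[]. Qed.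

Lemma big_nat_flatten (T R : Type) (idx : R) (op : Monoid.law idx) (P : pred T) (x0 : T)
    (ss : seq (seq T)) (F : nat -> R) :
  \big[op/idx]_(0 <= n < size (flatten ss) | P (nth x0 (flatten ss) n)) F n =
  \big[op/idx]_(0 <= i < size ss)
     \big[op/idx]_(0 <= n < size (nth [::] ss i) | P (nth x0 (nth [::] ss i) n))
        F (flatten_index (shape ss) i n).
Proof.
elim: ss F => [|s ss IH] F; first by rewrite !big_geq.
rewrite /= size_cat (@big_cat_nat _ _ _ (size s)) ?leq_addr // big_nat_recl //=.
congr (op _ _).
  rewrite big_mkcond [RHS]big_mkcond.
  by apply: eq_big_nat => n /andP[_ lt_n]; rewrite nth_cat lt_n.
rewrite -{1}[size s]add0n big_addn addKn big_mkcond.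
under eq_big_nat => n _ do rewrite nth_cat ltnNge leq_addl /= addnK.
rewrite -big_mkcond IH; apply: eq_big_nat => i _; apply: eq_bigr => n _.
by rewrite /flatten_index /= addnC addnA.
Qed.

Local Open Scope ring_scope.

Section Derivations.
Variables (K : fieldType) (X : countType).
Implicit Types (t u : tree X) (ts : seq (tree X)) (m : mono X) (ms : seq (mono X)).
Local Notation V := (KX K X).
Local Notation tnil := (@Node X [::]).

Definition mono_of t : mono X := mk_mono (Some t).

Lemma val_mono_of t : reduced t -> val (mono_of t) = Some t.
Proof. by move=> red_t; rewrite /mono_of /mk_mono insubdK. Qed.

Lemma mk_mono_None : mk_mono None = mono1 X.
Proof. by apply: val_inj; rewrite /mk_mono insubdK. Qed.

Lemma pmap_val_mono_of ts : all (@reduced X) ts -> pmap val (map mono_of ts) = ts.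
Proof. by elim: ts => //= u us IH /andP[red_u red_us]; rewrite val_mono_of //= IH. Qed.

Lemma pmap_val_set_nth ts i m : (i < size ts)%N -> all (@reduced X) ts ->
  pmap val (set_nth (mono1 X) (map mono_of ts) i m) = subst_child ts i (val m).
Proof.
move=> lt_i red_ts; rewrite /subst_child set_nthE size_map lt_i pmap_cat -map_take /= -map_drop.
by rewrite !pmap_val_mono_of ?all_take ?all_drop //; case: (val m).
Qed.

Lemma vee_mono_red ms C : pmap val ms = map (@red X) C -> (0 < size C)%N ->
  vee_mono ms = mono_of (red (Node C)).
Proof. by rewrite /vee_mono => ->; case: C => [|u [|u' us]]. Qed.

Definition linext (F : mono X -> V) (v : V) : V := \sum_(m <- msupp v) v@_m *: F m.

Lemma linext_fsubset F v (d : {fset mono X}) : (msupp v `<=` d)%fset ->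
  linext F v = \sum_(m <- d) v@_m *: F m.
Proof.
move=> le_v; rewrite /linext (big_fset_incl _ le_v) //= => m _ /mcoeff_outdom ->.
by rewrite scale0r.
Qed.

Lemma linextD F (v w : V) : linext F (v + w) = linext F v + linext F w.
Proof.
rewrite (linext_fsubset F (msuppD_le v w)).
rewrite (linext_fsubset F (fsubsetUl (msupp v) (msupp w))).
rewrite (linext_fsubset F (fsubsetUr (msupp v) (msupp w))) -big_split /=.
by apply: eq_bigr => m _; rewrite mcoeffD scalerDl.
Qed.

Lemma linext0 F : linext F 0 = 0.
Proof. by rewrite /linext msupp0 big_seq_fset0. Qed.

Lemma linext_sum F (I : Type) (r : seq I) (P : pred I) (G : I -> V) :
  linext F (\sum_(i <- r | P i) G i) = \sum_(i <- r | P i) linext F (G i).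
Proof. exact: (big_morph _ (linextD F) (linext0 F)). Qed.

Lemma linextU F m : linext F << m >> = F m.
Proof. by rewrite (linext_fsubset F msuppU_le) big_seq_fset1 mcoeffUU scale1r. Qed.

Lemma multilin_monos (f : seq (mono X) -> V) ms :
  multilin f [seq << m >> | m <- ms] = f ms.
Proof. by elim: ms f => //= m ms IH f; rewrite -/(linext _ _) linextU IH. Qed.

Lemma multilin_set_nth (f : seq (mono X) -> V) ms i v : (i < size ms)%N ->
  multilin f (set_nth 0 [seq << m >> | m <- ms] i v) =
    linext (fun m => f (set_nth (mono1 X) ms i m)) v.
Proof.
elim: ms f i => [|m0 ms IH] f i lt_i; first by rewrite ltn0 in lt_i.
case: i lt_i => [|i] lt_i.
  change (linext (fun m => multilin (fun ms' => f (m :: ms')) [seq << m >> | m <- ms]) v =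
          linext (fun m => f (m :: ms)) v).
  by apply: eq_bigr => m _; rewrite multilin_monos.
change (linext (fun m => multilin (fun ms' => f (m :: ms')) (set_nth 0 [seq << m >> | m <- ms] i v))
          << m0 >> = linext (fun m => f (m0 :: set_nth (mono1 X) ms i m)) v).
by rewrite linextU IH.
Qed.

Definition graft_at ts i m : mono X := vee_mono (set_nth (mono1 X) (map mono_of ts) i m).

Lemma vee_Node ts : reduced (Node ts) ->
  vee [seq << m >> : V | m <- map mono_of ts] = << mono_of (Node ts) >>.
Proof.
move=> red_Node; have /andP[size_ts red_ts] := red_Node.
rewrite /vee multilin_monos (@vee_mono_red _ ts) ?red_id //.
  by rewrite pmap_val_mono_of // map_red_id.
exact: ltn_trans size_ts.
Qed.

Lemma derivation_Node (D : {linear V -> V}) ts : is_derivation D -> reduced (Node ts) ->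
  D << mono_of (Node ts) >> =
    \sum_(i < size ts) linext (fun m => << graft_at ts i m >>) (D << mono_of (nth tnil ts i) >>).
Proof.
move=> [_ D_vee] red_Node; have /andP[size_ts _] := red_Node.
rewrite -vee_Node // D_vee; rewrite !size_map //.
apply: eq_bigr => i _.
rewrite (nth_map (mono_of tnil)) ?size_map // (nth_map tnil) //.
by rewrite /vee multilin_set_nth ?size_map.
Qed.

Lemma graft_at_red ts i o : reduced (Node ts) -> (i < size ts)%N ->
    reducedo (omap (@red X) o) ->
  graft_at ts i (mk_mono (omap (@red X) o)) = mono_of (red (Node (subst_child ts i o))).
Proof.
case/andP=> size_ts red_ts lt_i red_o.
rewrite /graft_at (vee_mono_red (C := subst_child ts i o)) ?size_subst_child_gt0 //.
rewrite pmap_val_set_nth // /mk_mono insubdK // /subst_child map_cat.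
rewrite map_red_id ?all_take //.
by case: o {red_o} => [v|] /=; rewrite map_red_id ?all_drop.
Qed.

End Derivations.

Section DerivationOnTrees.
Variables (K : fieldType) (X : countType) (k : X) (D : {linear KX K X -> KX K X}).
Variable Phi : tree X -> nat -> mono X.
Local Notation tnil := (@Node X [::]).
Hypothesis derD : is_derivation D.
Hypothesis D_Leaf : forall x, D << mono_of (Leaf x) >> = (x == k)%:R *: << Phi (Leaf x) 0 >>.
Hypothesis Phi_graft : forall ts i n, reduced (Node ts) -> (i < size ts)%N ->
  (n < nleaves (nth tnil ts i))%N ->
  graft_at ts i (Phi (nth tnil ts i) n) = Phi (Node ts) (leaf_offset ts i + n).

Lemma derivation_sum_leaves t : reduced t ->
  D << mono_of t >> = \sum_(0 <= n < nleaves t | nth k (leaves t) n == k) << Phi t n >>.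
Proof.
elim/tree_ind_mem: t => [x|ts IH] red_t.
  by rewrite D_Leaf big_mkcond big_nat1 /=; case: (x == k); rewrite ?scale1r ?scale0r.
have /andP[_ red_ts] := red_t.
rewrite derivation_Node // /nleaves /= (big_nat_flatten _ (fun y => y == k)) size_map big_mkord.
apply: eq_bigr => -[i lt_i] _ /=.
rewrite (nth_map tnil) // /shape -map_comp IH; last 2 first.
- exact: mem_nth.
- exact/(allP red_ts)/mem_nth.
rewrite linext_sum; apply: congr_big_nat => // n /andP[_ /andP[_ lt_n]].
by rewrite linextU Phi_graft.
Qed.

End DerivationOnTrees.

Section Partials.
Variables (K : fieldType) (X : countType) (k : X).
Local Notation tnil := (@Node X [::]).

Lemma graft_at_relabel j ts i n : reduced (Node ts) -> (i < size ts)%N ->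
    (n < nleaves (nth tnil ts i))%N ->
  graft_at ts i (mono_of (relabel n j (nth tnil ts i))) =
    mono_of (relabel (leaf_offset ts i + n) j (Node ts)).
Proof.
move=> red_Node lt_i lt_n; have /andP[_ red_ts] := red_Node.
have red_child : reduced (relabel n j (nth tnil ts i)).
  by rewrite reduced_mapl; apply/(allP red_ts)/mem_nth.
have relabel_Node : relabel (leaf_offset ts i + n) j (Node ts) =
    Node (subst_child ts i (Some (relabel n j (nth tnil ts i)))).
  rewrite /relabel maplE (mapls_at lt_i) => [|m x lt_m|m x le_m].
  - by congr (Node (subst_child _ _ (Some _))); apply: eq_mapl => m x; rewrite eqn_add2l.
  - by rewrite ltn_eqF // ltn_addr.
  - by rewrite gtn_eqF // (leq_trans _ le_m) // leaf_offsetS // ltn_add2l.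
have red_relabel : reduced (relabel (leaf_offset ts i + n) j (Node ts)) by rewrite reduced_mapl.
rewrite -[in LHS](red_id red_child) (graft_at_red (o := Some _)) //; last by rewrite /= red_id.
by rewrite -relabel_Node red_id.
Qed.

Lemma graft_at_restr ts i n : reduced (Node ts) -> (i < size ts)%N ->
    (n < nleaves (nth tnil ts i))%N ->
  graft_at ts i (mk_mono (omap (@red X) (restr (fun m => m != n) (nth tnil ts i)))) =
    mk_mono (omap (@red X) (restr (fun m => m != leaf_offset ts i + n)%N (Node ts))).
Proof.
move=> red_Node lt_i lt_n; have /andP[size_ts red_ts] := red_Node.
rewrite graft_at_red ?reducedo_red_restr // restrE (restrs_at lt_i red_ts) => [|m lt_m|m le_m].
- rewrite (eq_restr _ (J := fun m => m != n)) => [|m]; last by rewrite eqn_add2l.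
  have := size_subst_child_gt0 (restr (fun m => m != n) (nth tnil ts i)) size_ts lt_i.
  by case: (subst_child _ _ _).
- by rewrite ltn_eqF // ltn_addr.
- by rewrite gtn_eqF // (leq_trans _ le_m) // leaf_offsetS // ltn_add2l.
Qed.

Lemma partial2_relabel j (D : {linear KX K X -> KX K X}) t : is_partial2 k j D -> reduced t ->
  D << mono_of t >> =
    \sum_(0 <= n < nleaves t | nth k (leaves t) n == k) << mono_of (relabel n j t) >>.
Proof.
case=> derD D_var; pose Phi t n := mono_of (relabel n j t).
apply: (derivation_sum_leaves (Phi := Phi)) => [//|x|ts i n].
  by rewrite [LHS]D_var /Phi; case: (x == k); rewrite ?scale1r ?scale0r.
exact: graft_at_relabel.
Qed.

Lemma partial_restr (D : {linear KX K X -> KX K X}) t : is_partial k D -> reduced t ->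
  D << mono_of t >> = \sum_(0 <= n < nleaves t | nth k (leaves t) n == k)
    << mk_mono (omap (@red X) (restr (fun m => m != n) t)) >>.
Proof.
case=> derD D_var; pose Phi t n := mk_mono (omap (@red X) (restr (fun m => m != n) t)).
apply: (derivation_sum_leaves (Phi := Phi)) => [//|x|ts i n].
  by rewrite [LHS]D_var /Phi /= mk_mono_None.
exact: graft_at_restr.
Qed.

End Partials.

Theorem proposition4p2p6 (K : fieldType) (X : countType)
  (charK : [pchar K] =i pred0) (T : mono X) (k : X) :
  (forall (j : X) (D : {linear KX K X -> KX K X}), is_partial2 k j D ->
     D << T >> =
     \sum_(i < size (leaveso (val T)) | nth k (leaveso (val T)) i == k)
        << mk_mono (omap (relabel i j) (val T)) >>) /\
  (forall D : {linear KX K X -> KX K X}, is_partial k D ->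
     D << T >> =
     \sum_(i < size (leaveso (val T)) | nth k (leaveso (val T)) i == k)
        << mk_mono (omap (@red X)
              (obind (restr (fun n => n != i)) (val T))) >>).
Proof.
case: T => [[t|] red_T]; last first.
  have -> : exist _ None red_T = mono1 X by apply: val_inj.
  rewrite /= big_ord0 -[<< mono1 X >>]scale1r.
  by split=> [j D [[D_const _] _] | D [[D_const _] _]]; apply: D_const.
have -> : exist _ (Some t) red_T = mono_of t by apply: val_inj; rewrite val_mono_of.
rewrite /= val_mono_of //.
split=> [j D partialD | D partialD].
- by rewrite (partial2_relabel partialD) // big_mkord.
- by rewrite (partial_restr partialD) // big_mkord.
Qed.
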